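(* In the two-door cascading memoryless setting, let $\pi=(\pi_0,\pi_1,\pi_2,\dots)$ and $\pi'=(\pi'_0,\pi'_1,\pi'_2,\dots)$ be semi-fractional sequences (given as non-decreasing sequences of non-negative reals with $\pi_0=\pi'_0=0$). If $\pi_i\le\pi'_i\le\pi_i+1$ for all $i$, then $\mathbb{E}[\pi']\le\mathbb{E}[\pi]+1$.
   Context: Two cascading memoryless doors with durations: parameters $p_1,p_2\in(0,1)$, $q_1=1-p_1$, $q_2=1-p_2$, and $c>0$. Both doors start closed. A semi-fractional sequence given by a non-decreasing sequence of reals $0=\pi_0\le\pi_1\le\pi_2\le\cdots$ is the alternating knock sequence $1^{\pi_1-\pi_0}\,2\,1^{\pi_2-\pi_1}\,2\cdots$. A 1-knock $1^t$ takes $t$ time units and, if door 1 is closed, opens it with probability $1-q_1^t$, independently of everything else. A 2-knock takes $c$ time units and opens door 2 with probability $p_2$ (independently) if door 1 is open at that time, and with probability $0$ otherwise. There is no feedback. The running time is the time at which both doors are open (the $i$-th 2-knock ends at time $\pi_i+ci$), and $\mathbb{E}[\pi]$ denotes its expectation. *)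

From HB Require Import structures.
From mathcomp Require Import all_boot all_order all_algebra.
From mathcomp Require Import all_classical all_reals all_analysis.
Set Implicit Arguments. Unset Strict Implicit. Unset Printing Implicit Defensive.
Import Order.TTheory GRing.Theory Num.Theory.
Local Open Scope ring_scope.

Section Doors.
Variable R : realType.

Definition semi_fractional (pi : nat -> R) : Prop :=
  pi 0%N = 0 /\ (forall n, pi n <= pi n.+1).

(* Probability that door 1 is still closed after total 1-knocking time t. *)
Definition closed1 (p1 : R) (t : R) : R := (1 - p1) `^ t.

(* Probability that the running time equals pi i + c*i, i.e. the i-th 2-knock
   (i >= 1) is the first one opening door 2: door 1 opened during the block
   1^(pi j - pi (j-1)) preceding the j-th 2-knock (j <= i), the 2-knocks
   j, ..., i-1 failed and the i-th one succeeded. *)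
Definition prob_end_at (p1 p2 : R) (pi : nat -> R) (i : nat) : R :=
  \sum_(1 <= j < i.+1)
     (closed1 p1 (pi j.-1) - closed1 p1 (pi j)) * (1 - p2) ^+ (i - j) * p2.

Definition prob_never (p1 p2 : R) (pi : nat -> R) : \bar R :=
  (1%:E - \sum_(1 <= i <oo) (prob_end_at p1 p2 pi i)%:E)%E.

(* Expected running time E[pi] (in the extended reals; the convention
   +oo * 0 = 0 applies to the event of infinite running time). *)
Definition expected_time (p1 p2 c : R) (pi : nat -> R) : \bar R :=
  (\sum_(1 <= i <oo) ((pi i + c * i%:R) * prob_end_at p1 p2 pi i)%:E
   + +oo * prob_never p1 p2 pi)%E.

End Doors.

From HB Require Import structures.
From mathcomp Require Import all_boot all_order all_algebra.
From mathcomp Require Import all_classical all_reals all_analysis.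
From mathcomp Require Import ring lra.
Import Order.TTheory GRing.Theory Num.Theory.
Set Implicit Arguments. Unset Strict Implicit.
Local Open Scope ring_scope.

(* Let T be the index of the 2-knock that opens door 2 and F n the probability
   that door 1 is still closed after 1-knocking for time pi n.  The tail
   probabilities U n = P(T > n) obey U (n+1) = (1 - p2) U n + p2 F (n+1), so they
   are monotone in F.  Since pi <= pi', door 1 opens earlier under pi', hence
   F' <= F and U' <= U.  For a non-decreasing cost x with x 0 >= 0, the mean of
   x stopped at T /\ n equals x 0 + sum_(k < n) (x (k+1) - x k) U k, so it can
   only decrease when U is replaced by U'; as x' <= x + 1 for the costs
   x i = pi i + c i, the bound follows once U n -> 0.  Otherwise the doors stay
   closed with positive probability and E[pi] = +oo. *)

Section NonnegSeries.
Variable R : realType.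
Local Open Scope ereal_scope.

Lemma nneseries_le_ub (u : nat -> R) m (x : \bar R) : (forall n, (0 <= u n)%R) ->
  (forall k, (m <= k)%N -> (\sum_(m <= i < k) u i)%:E <= x) ->
  \sum_(m <= i <oo) (u i)%:E <= x.
Proof.
move=> u_ge0 partial_le; apply: lime_le.
  by apply: is_cvg_ereal_nneg_natsum => n _; rewrite lee_fin.
by near=> k; rewrite sumEFin partial_le//; near: k; exact: nbhs_infty_ge.
Unshelve. all: by end_near. Qed.

Lemma nneseries_ge_partial (u : nat -> R) m k : (forall n, (0 <= u n)%R) ->
  (\sum_(m <= i < k) u i)%:E <= \sum_(m <= i <oo) (u i)%:E.
Proof.
by move=> u_ge0; rewrite -sumEFin; apply: nneseries_lim_ge => n _ _; rewrite lee_fin.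
Qed.

End NonnegSeries.

Section Cascade.
Variables (R : realType) (p2 : R).
Hypothesis hp2 : 0 < p2 < 1.

Let p2_ge0 : 0 <= p2. Proof. by case/andP: hp2 => /ltW. Qed.
Let q2_ge0 : 0 <= 1 - p2. Proof. by case/andP: hp2 => _ /ltW; rewrite subr_ge0. Qed.

(* For F n = closed1 p1 (pi n): pending F n is the probability that door 1 is
   open and door 2 closed when the n-th 2-knock starts, stop_prob F n is
   prob_end_at, tail F n is the probability that the doors are not both open
   after the n-th 2-knock, and stopped_mean F x n is the mean of x at the
   running index truncated at n. *)
Definition pending (F : nat -> R) n :=
  \sum_(1 <= j < n.+1) (F j.-1 - F j) * (1 - p2) ^+ (n - j).
Definition stop_prob F n := pending F n * p2.
Definition tail F n := (1 - p2) * pending F n + F n.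
Definition stopped_mean F (x : nat -> R) n :=
  \sum_(1 <= i < n.+1) x i * stop_prob F i + x n * tail F n.

Lemma pending0 F : pending F 0 = 0.
Proof. by rewrite /pending big_geq. Qed.

Lemma pendingS F n : pending F n.+1 = (1 - p2) * pending F n + (F n - F n.+1).
Proof.
rewrite /pending big_nat_recr //= subnn expr0 mulr1 big_distrr /=; congr (_ + _).
by apply: eq_big_nat => j /andP[_ jn]; rewrite subSn // exprS; ring.
Qed.

Lemma tail0 F : tail F 0 = F 0.
Proof. by rewrite /tail pending0 mulr0 add0r. Qed.

Lemma tailS F n : tail F n.+1 = tail F n - stop_prob F n.+1.
Proof. by rewrite /tail /stop_prob pendingS; ring. Qed.

Lemma tailS_convex F n : tail F n.+1 = (1 - p2) * tail F n + p2 * F n.+1.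
Proof. by rewrite /tail pendingS; ring. Qed.

Lemma sum_stop_prob_add_tail F n :
  \sum_(1 <= i < n.+1) stop_prob F i + tail F n = F 0.
Proof.
elim: n => [|n IH]; first by rewrite big_geq // add0r tail0.
by rewrite big_nat_recr //= tailS -IH; ring.
Qed.

Lemma tail_le_tail F F' : (forall n, F' n <= F n) -> forall n, tail F' n <= tail F n.
Proof.
move=> le_F'F; elim=> [|n IH]; first by rewrite !tail0.
by rewrite !tailS_convex; apply: lerD; apply: ler_wpM2l.
Qed.

Lemma sum_stop_prob_le F F' n : F' 0 = F 0 -> (forall n, F' n <= F n) ->
  \sum_(1 <= i < n.+1) stop_prob F i <= \sum_(1 <= i < n.+1) stop_prob F' i.
Proof.
move=> F'0 le_F'F; have := tail_le_tail le_F'F n.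
by have := sum_stop_prob_add_tail F n; have := sum_stop_prob_add_tail F' n; lra.
Qed.

Lemma stopped_mean0 F x : stopped_mean F x 0 = x 0 * F 0.
Proof. by rewrite /stopped_mean big_geq // add0r tail0. Qed.

Lemma stopped_meanS F x n :
  stopped_mean F x n.+1 = stopped_mean F x n + (x n.+1 - x n) * tail F n.
Proof. by rewrite /stopped_mean big_nat_recr //= tailS; ring. Qed.

Lemma stopped_mean_le F F' x : nondecreasing_seq x -> 0 <= x 0 ->
  (forall n, F' n <= F n) -> forall n, stopped_mean F' x n <= stopped_mean F x n.
Proof.
move=> x_nondecr x0_ge0 le_F'F; elim=> [|n IH].
  by rewrite !stopped_mean0 ler_wpM2l.
rewrite !stopped_meanS lerD // ler_wpM2l ?tail_le_tail //.
by rewrite subr_ge0 x_nondecr.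
Qed.

Section Nonincreasing.
Variable F : nat -> R.
Hypothesis F_nonincr : forall n, F n.+1 <= F n.

Lemma pending_ge0 n : 0 <= pending F n.
Proof.
elim: n => [|n IH]; first by rewrite pending0.
by rewrite pendingS addr_ge0 ?mulr_ge0 // subr_ge0.
Qed.

Lemma stop_prob_ge0 n : 0 <= stop_prob F n.
Proof. exact: mulr_ge0 (pending_ge0 n) p2_ge0. Qed.

Lemma tail_nonincr : nonincreasing_seq (tail F).
Proof. by apply/nonincreasing_seqP => n; rewrite tailS gerBl stop_prob_ge0. Qed.

Lemma stopped_mean_le_sum x n m : nondecreasing_seq x -> (n <= m)%N ->
  stopped_mean F x n <= \sum_(1 <= i < m.+1) x i * stop_prob F i + x n * tail F m.
Proof.
move=> x_nondecr; elim: m => [|m IH]; first by rewrite leqn0 => /eqP ->.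
rewrite leq_eqVlt ltnS => /predU1P[-> // | nm]; apply: le_trans (IH nm) _.
rewrite tailS [X in _ <= X + _]big_nat_recr //= -addrA lerD2l mulrBr addrCA lerDl -mulrBl.
by rewrite mulr_ge0 ?stop_prob_ge0 // subr_ge0 x_nondecr // leqW.
Qed.

Hypothesis F_ge0 : forall n, 0 <= F n.

Lemma tail_ge0 n : 0 <= tail F n.
Proof. by rewrite addr_ge0 ?mulr_ge0 ?pending_ge0. Qed.

Lemma sum_stop_prob_le_head n : \sum_(1 <= i < n.+1) stop_prob F i <= F 0.
Proof. by rewrite -(sum_stop_prob_add_tail F n) lerDl tail_ge0. Qed.

End Nonincreasing.

Lemma tail_lt_of_series F : (forall n, F n.+1 <= F n) ->
  (\sum_(1 <= i <oo) (stop_prob F i)%:E = (F 0)%:E)%E ->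
  forall d, 0 < d -> exists m, tail F m < d.
Proof.
move=> F_nonincr series_F0 d d_gt0; apply: contrapT => /forallNP tail_ge.
have : (\sum_(1 <= i <oo) (stop_prob F i)%:E <= (F 0 - d)%:E)%E.
  apply: nneseries_le_ub => [i|[|k] // _]; first exact: stop_prob_ge0.
  move/negP: (tail_ge k); rewrite -leNgt lee_fin.
  by have := sum_stop_prob_add_tail F k; lra.
by rewrite series_F0 lee_fin; lra.
Qed.

Definition expected F x : \bar R :=
  (\sum_(1 <= i <oo) (x i * stop_prob F i)%:E
   + +oo * (1%:E - \sum_(1 <= i <oo) (stop_prob F i)%:E))%E.

Section Comparison.
Variables F F' x x' : nat -> R.
Hypotheses (F_nonincr : forall n, F n.+1 <= F n) (F_ge0 : forall n, 0 <= F n).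
Hypotheses (F'_nonincr : forall n, F' n.+1 <= F' n) (F'_ge0 : forall n, 0 <= F' n).
Hypothesis le_F'F : forall n, F' n <= F n.
Hypotheses (x'_nondecr : nondecreasing_seq x') (x'0_ge0 : 0 <= x' 0).
Hypothesis le_x'x : forall n, x' n <= x n + 1.

Let x'_ge0 n : 0 <= x' n.
Proof. by rewrite (le_trans x'0_ge0) ?x'_nondecr. Qed.

Lemma partial_mean_le n m : F 0 <= 1 -> (n <= m)%N ->
  \sum_(1 <= i < n.+1) x' i * stop_prob F' i <=
  \sum_(1 <= i < m.+1) x i * stop_prob F i + 1 + x' n * tail F m.
Proof.
move=> F0_le1 nm.
have stopped_mean_ge : \sum_(1 <= i < n.+1) x' i * stop_prob F' i <= stopped_mean F' x' n.
  by rewrite /stopped_mean lerDl mulr_ge0 ?tail_ge0.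
have shifted_sum_le : \sum_(1 <= i < m.+1) x' i * stop_prob F i <=
    \sum_(1 <= i < m.+1) x i * stop_prob F i + 1.
  have := sum_stop_prob_le_head F_nonincr F_ge0 m.
  suff : \sum_(1 <= i < m.+1) x' i * stop_prob F i <=
      \sum_(1 <= i < m.+1) (x i * stop_prob F i + stop_prob F i).
    by rewrite big_split /=; lra.
  apply: ler_sum_nat => i _; rewrite -[X in _ + X]mul1r -mulrDl.
  by rewrite ler_wpM2r ?stop_prob_ge0.
have := stopped_mean_le x'_nondecr x'0_ge0 le_F'F n.
have := stopped_mean_le_sum F_nonincr x'_nondecr nm.
lra.
Qed.

Lemma partial_mean_le_ub (e : R) : F 0 <= 1 ->
  (forall m, \sum_(1 <= i < m.+1) x i * stop_prob F i <= e) ->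
  (forall d, 0 < d -> exists m, tail F m < d) ->
  forall n, \sum_(1 <= i < n.+1) x' i * stop_prob F' i <= e + 1.
Proof.
move=> F0_le1 partial_le_e tail_small n; apply/ler_addgt0Pr => eps eps_gt0.
have x'n1_gt0 : 0 < x' n + 1 by have := x'_ge0 n; lra.
set d := eps / (x' n + 1).
have [m tail_m] := tail_small d (divr_gt0 eps_gt0 x'n1_gt0).
have tail_max : tail F (maxn n m) <= d.
  exact: le_trans (tail_nonincr F_nonincr (leq_maxr n m)) (ltW tail_m).
have : x' n * tail F (maxn n m) <= (x' n + 1) * d.
  rewrite (le_trans (ler_wpM2l (x'_ge0 n) tail_max)) // ler_wpM2r ?lerDl //.
  exact: ltW (divr_gt0 eps_gt0 x'n1_gt0).
rewrite /d [X in _ <= X]mulrC divfK ?gt_eqF //.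
have := partial_mean_le F0_le1 (leq_maxl n m); have := partial_le_e (maxn n m).
lra.
Qed.

Lemma mean_le_add1 : F 0 = 1 -> (forall n, 0 <= x n) ->
  (\sum_(1 <= i <oo) (stop_prob F i)%:E = 1)%E ->
  (\sum_(1 <= i <oo) (x' i * stop_prob F' i)%:E <=
   \sum_(1 <= i <oo) (x i * stop_prob F i)%:E + 1)%E.
Proof.
move=> F0 x_ge0 series_F1.
have mean_ge0 i : 0 <= x i * stop_prob F i by rewrite mulr_ge0 ?stop_prob_ge0.
set E := (\sum_(1 <= i <oo) (x i * stop_prob F i)%:E)%E.
have [->|E_fin] := eqVneq E +oo%E; first by rewrite addye ?leey.
have E_real : E = (fine E)%:E.
  rewrite fineK // ge0_fin_numE ?lt_neqAle ?E_fin ?leey //.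
  by apply: nneseries_ge0 => i _ _; rewrite lee_fin.
rewrite E_real -EFinD; apply: nneseries_le_ub => [i|[|k] // _].
  by rewrite mulr_ge0 ?stop_prob_ge0.
rewrite lee_fin; apply: partial_mean_le_ub => [|m|]; first by rewrite F0.
  by rewrite -lee_fin -E_real nneseries_ge_partial.
by apply: tail_lt_of_series; rewrite // series_F1 F0.
Qed.

Lemma expected_le_add1 : F 0 = 1 -> F' 0 = 1 -> (forall n, 0 <= x n) ->
  (expected F' x' <= expected F x + 1%:E)%E.
Proof.
move=> F0 F'0 x_ge0; rewrite /expected.
set S := (\sum_(1 <= i <oo) (stop_prob F i)%:E)%E.
have S_le1 : (S <= 1)%E.
  apply: nneseries_le_ub => [i|[|k] // _]; first exact: stop_prob_ge0.
  by rewrite lee_fin -F0 sum_stop_prob_le_head.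
move: S_le1; rewrite le_eqVlt => /predU1P[S1|S_lt1]; last first.
  (* the doors never both open with positive probability: E[pi] = +oo *)
  have mean_ge0 : (0 <= \sum_(1 <= i <oo) (x i * stop_prob F i)%:E)%E.
    by apply: nneseries_ge0 => i _ _; rewrite lee_fin mulr_ge0 ?stop_prob_ge0.
  rewrite (gt0_mulye (x := 1 - S)) ?sube_gt0 // addey ?addye ?leey //.
  by rewrite gt_eqF // (lt_le_trans _ mean_ge0) ?ltNy0.
have S'_ge1 : (1 <= \sum_(1 <= i <oo) (stop_prob F' i)%:E)%E.
  rewrite -S1; apply: nneseries_le_ub => [i|[|k] // _]; first exact: stop_prob_ge0.
  apply: le_trans (nneseries_ge_partial _ k.+1 (stop_prob_ge0 F'_nonincr)).
  by rewrite lee_fin sum_stop_prob_le // F0 F'0.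
rewrite S1 subee // mule0 adde0 -[X in (_ <= X)%E]adde0.
apply: leeD; first exact: mean_le_add1.
by rewrite mule_ge0_le0 ?sube_le0.
Qed.

End Comparison.
End Cascade.

Lemma closed1_0 (R : realType) (p1 : R) : closed1 p1 0 = 1.
Proof. exact: powRr0. Qed.

Lemma closed1_ge0 (R : realType) (p1 t : R) : 0 <= closed1 p1 t.
Proof. exact: powR_ge0. Qed.

Lemma closed1_nonincr (R : realType) (p1 s t : R) : 0 < p1 < 1 -> s <= t ->
  closed1 p1 t <= closed1 p1 s.
Proof. by case/andP=> p1_gt0 p1_lt1; apply: ger_powR; apply/andP; split; lra. Qed.

Lemma expected_timeE (R : realType) (p1 p2 c : R) (pi : nat -> R) :
  expected_time p1 p2 c pi =
  expected p2 (fun n => closed1 p1 (pi n)) (fun i => pi i + c * i%:R).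
Proof.
rewrite /expected_time /prob_never.
suff -> : prob_end_at p1 p2 pi = stop_prob p2 (fun n => closed1 p1 (pi n)) by [].
by apply: funext => i; rewrite /prob_end_at /stop_prob /pending big_distrl.
Qed.

Theorem mainTheorem11 (R : realType) (p1 p2 c : R)
  (hp1 : 0 < p1 < 1) (hp2 : 0 < p2 < 1) (hc : 0 < c)
  (pi pi' : nat -> R)
  (hpi : semi_fractional pi) (hpi' : semi_fractional pi')
  (hle : forall i, pi i <= pi' i <= pi i + 1) :
  (expected_time p1 p2 c pi' <= expected_time p1 p2 c pi + 1%:E)%E.
Proof.
case: hpi hpi' => [pi0 pi_nondecr] [pi'0 pi'_nondecr].
have pi_ge0 n : 0 <= pi n.
  by elim: n => [|n IH]; [rewrite pi0 | exact: le_trans (pi_nondecr n)].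
rewrite !expected_timeE; apply: expected_le_add1 => //.
- by move=> n; exact: closed1_nonincr hp1 (pi_nondecr n).
- by move=> n; exact: closed1_ge0.
- by move=> n; exact: closed1_nonincr hp1 (pi'_nondecr n).
- by move=> n; exact: closed1_ge0.
- by move=> n; case/andP: (hle n) => le_pi_pi' _; exact: closed1_nonincr hp1 le_pi_pi'.
- apply/nondecreasing_seqP => n; rewrite -natr1 mulrDr mulr1.
  by have := pi'_nondecr n; have := ltW hc; lra.
- by rewrite pi'0 mulr0 addr0.
- by move=> n; case/andP: (hle n) => _; lra.
- by rewrite /= pi0 closed1_0.
- by rewrite /= pi'0 closed1_0.
- by move=> n; rewrite addr_ge0 ?mulr_ge0 ?(ltW hc).
Qed.
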